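(* Let $V$ be a real vector space of odd finite dimension, $G\le\mathrm{GL}(V)$ a finite group such that $V$ is a non-trivial irreducible $\mathbb{R}G$-module and $-\mathrm{id}_V\notin G$, and let $n\in N_{\mathrm{GL}(V)}(G)$ have finite order. Let $\nu=\mathrm{ad}_n\in\mathrm{Aut}(G)$, $G'=\langle\mathrm{Inn}(G),\nu\rangle\le\mathrm{Aut}(G)$, and let $\chi'$ be the character of $G'$ defined below. Suppose there is $g\in G$ such that $\alpha:=\mathrm{ad}_g\circ\nu$ has even order and the restriction of $\chi'$ to the cyclic group $\langle\alpha\rangle$ has positive scalar product with every real-valued irreducible character of $\langle\alpha\rangle$ (i.e. with the trivial character and with the linear character sending $\alpha$ to $-1$). Then the triple $(G,V,n)$ has the $E1$-property.
   Context: For $x\in N_{\mathrm{GL}(V)}(G)$, $\mathrm{ad}_x\in\mathrm{Aut}(G)$ denotes conjugation $y\mapsto xyx^{-1}$. Put $A=\langle G,n\rangle\le\mathrm{GL}(V)$, and $A'=A$ if $-\mathrm{id}_V\notin A$, $A'=A\cap\mathrm{SL}(V)$ if $-\mathrm{id}_V\in A$. The map $A\to G'$, $gn^i\mapsto\mathrm{ad}_g\circ\nu^i$ ($g\in G$, $i\in\mathbb{Z}$) is a surjective homomorphism restricting to an isomorphism $A'\to G'$; via the inverse of this isomorphism $V$ becomes an $\mathbb{R}G'$-module, and $\chi'$ denotes its character. The triple $(G,V,n)$ has the $E1$-property if there is $g\in G$ such that $gn$ has eigenvalue $1$. *)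

From mathcomp Require Import all_boot all_order all_algebra all_fingroup.
From mathcomp Require Import mxrepresentation.
From mathcomp Require Export reals.
Set Implicit Arguments. Unset Strict Implicit. Unset Printing Implicit Defensive.
Import GRing.Theory Num.Theory.
Local Open Scope ring_scope.

(* GL(V) is identified with the group of invertible (d+1)x(d+1) real matrices
   under matrix multiplication; the finite group G <= GL(V) is the image of a
   faithful matrix representation rG of an abstract finite group. *)

(* M lies in A = <G, n> = { g n^i | g in G, i in N } *)
Definition inA (R : fieldType) (gT : finGroupType) (G : {group gT}) (d : nat)
  (rG : mx_representation R G d.+1) (n M : 'M[R]_d.+1) : Prop :=
  exists x, exists i : nat, x \in G /\ M = rG x *m n ^+ i.

Definition inA' (R : fieldType) (gT : finGroupType) (G : {group gT}) (d : nat)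
  (rG : mx_representation R G d.+1) (n M : 'M[R]_d.+1) : Prop :=
  inA rG n M /\ (inA rG n (- 1%:M) -> \det M = 1).

Definition same_ad (R : fieldType) (gT : finGroupType) (G : {group gT}) (d : nat)
  (rG : mx_representation R G d.+1) (a b : 'M[R]_d.+1) : Prop :=
  forall x, x \in G -> a *m rG x *m invmx a = b *m rG x *m invmx b.

Definition ad_trivial (R : fieldType) (gT : finGroupType) (G : {group gT}) (d : nat)
  (rG : mx_representation R G d.+1) (b : 'M[R]_d.+1) : Prop :=
  forall x, x \in G -> b *m rG x *m invmx b = rG x.

Definition ad_order (R : fieldType) (gT : finGroupType) (G : {group gT}) (d : nat)
  (rG : mx_representation R G d.+1) (b : 'M[R]_d.+1) (m : nat) : Prop :=
  (0 < m)%N /\ ad_trivial rG (b ^+ m) /\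
  (forall k : nat, (0 < k < m)%N -> ~ ad_trivial rG (b ^+ k)).

From mathcomp Require Import all_boot all_order all_algebra all_fingroup.
From mathcomp Require Import mxrepresentation reals.
From mathcomp.real_closed Require Import polyrcf.

Set Implicit Arguments.
Unset Strict Implicit.
Unset Printing Implicit Defensive.

Import Order.POrderTheory GRing.Theory Num.Theory.
Local Open Scope ring_scope.

(* Write b := g n, and let a be the element of A' inducing the same
   automorphism as b.  In odd dimension every real matrix has a real
   eigenvalue, so Schur's lemma makes every matrix centralising the
   irreducible G a scalar: a = mu b, and b^m is a scalar since ad_b has
   order m.  Hence a^m = c with c = +-1 (all elements of A have determinant
   +-1), and c = -1 is impossible: then -id = a^m would lie in A, forcing
   det a = 1, while det (-id) = -1 in odd dimension.  So a has order dividing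
   m, and the two positive scalar products say that the projections
   (1/m) sum_k a^k and (1/m) sum_k (-a)^k are nonzero, i.e. that 1 and -1
   are eigenvalues of a.  Finally mu = +-1, so b = a or b = -a, and either
   way b has eigenvalue 1. *)

Lemma det_expr (R : comPzRingType) d (M : 'M[R]_d.+1) k :
  \det (M ^+ k) = \det M ^+ k.
Proof. by elim: k => [|k IHk]; rewrite ?det1 // !exprS detM IHk. Qed.

Lemma normr_det_eq1 (R : numDomainType) d (M : 'M[R]_d.+1) k :
  (0 < k)%N -> M ^+ k = 1 -> `|\det M| = 1.
Proof.
move=> k_gt0 Mk1; apply/eqP; rewrite -(pexpr_eq1 k_gt0) ?normr_ge0 //.
by rewrite -normrX -det_expr Mk1 det1 normr1.
Qed.

Lemma normr_eq1P (R : realDomainType) (x : R) : `|x| = 1 -> x = 1 \/ x = -1.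
Proof.
by move/eqP; rewrite eqr_norml ler01 andbT => /orP[]/eqP; [left|right].
Qed.

Lemma eigenvalue1_tr_sum (F : fieldType) d (a : 'M[F]_d.+1) m :
  a ^+ m = 1 -> \sum_(k < m) \tr (a ^+ k) != 0 -> eigenvalue a 1.
Proof.
rewrite -raddf_sum; set S := \sum_(k < m) a ^+ k => am1 trS_neq0.
have SaS : S *m a = 1 *: S.
  have comm_S : GRing.comm (a - 1) S.
    apply: commr_sum => k _; apply/commrX/commr_sym/commrB.
      exact: commr_refl.
    exact: commr1.
  apply/eqP; rewrite scale1r -subr_eq0 -{2}(mulmx1 S) -mulmxBr mulmxE.
  by rewrite -comm_S -subrX1 am1 subrr.
apply/eqP => eigen0; have := introT eigenspaceP SaS.
by rewrite eigen0 submx0 => /eqP S0; move: trS_neq0; rewrite S0 raddf0 eqxx.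
Qed.

Lemma eigenvalue1_mean_tr_gt0 (R : numFieldType) d (a : 'M[R]_d.+1) m :
  a ^+ m = 1 -> 0 < m%:R^-1 * \sum_(k < m) \tr (a ^+ k) -> eigenvalue a 1.
Proof.
move=> am1 mean_gt0; apply: eigenvalue1_tr_sum am1 _.
by apply: contraTneq mean_gt0 => ->; rewrite mulr0 ltxx.
Qed.

Lemma eigenvalue1_sign_scale (R : realFieldType) d (a b : 'M[R]_d.+1) mu :
  `|mu| = 1 -> a = mu *: b -> eigenvalue a 1 -> eigenvalue (- a) 1 ->
  eigenvalue b 1.
Proof.
case/normr_eq1P=> ->; rewrite ?scale1r ?scaleN1r => -> //.
by rewrite opprK.
Qed.

(* Schur's lemma needs an eigenvalue in the base field, which odd dimension
   provides over a real closed field. *)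
Lemma odd_centgmx_scalar (R : rcfType) (gT : finGroupType) (G : {group gT})
    d (rG : mx_representation R G d.+1) (c : 'M[R]_d.+1) :
  odd d.+1 -> mx_irreducible rG -> centgmx rG c -> exists l, c = l%:M.
Proof.
move=> odd_d irrG cGc.
have [l cl] : {l | root (char_poly c) l}.
  by apply: odd_poly_root; rewrite size_char_poly /= negbK.
exists l; apply/eqP; rewrite -subr_eq0; apply/negPn/negP => cl_neq0.
have cGcl : centgmx rG (c - l%:M).
  by apply/centgmxP => x Gx; rewrite mulmxBl mulmxBr (centgmxP cGc) ?scalar_mxC.
have cl_unit := mx_Schur irrG cGcl cl_neq0.
move: cl; rewrite -eigenvalue_root_char => /eigenvalueP [v vc v_neq0].
have : v *m (c - l%:M) = 0 by rewrite mulmxBr vc mul_mx_scalar subrr.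
by move/(canRL (mulmxK cl_unit)); rewrite mul0mx; apply/eqP.
Qed.

Section NormalizerOfRepresentation.

Variables (R : fieldType) (gT : finGroupType) (G : {group gT}) (d : nat).
Variables (rG : mx_representation R G d.+1) (n : 'M[R]_d.+1).
Hypothesis n_unit : n \in unitmx.
Hypothesis n_normalizes :
  forall x, x \in G -> exists y, y \in G /\ n *m rG x *m invmx n = rG y.

Lemma expr_mulmx_repr i x :
  x \in G -> exists2 y, y \in G & n ^+ i *m rG x = rG y *m n ^+ i.
Proof.
elim: i x => [|i IHi] x Gx; first by exists x; rewrite // expr0 mul1mx mulmx1.
have [y Gy ni_x] := IHi x Gx; have [z [Gz n_y]] := n_normalizes Gy.
exists z => //; rewrite exprS -mulmxE -mulmxA ni_x mulmxA -n_y.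
by rewrite mulmxA mulmxKV.
Qed.

Lemma inA_unitmx a : inA rG n a -> a \in unitmx.
Proof. by move=> [x [i [Gx ->]]]; rewrite unitmx_mul repr_mx_unit ?unitrX. Qed.

Lemma inA_mulmx a b : inA rG n a -> inA rG n b -> inA rG n (a *m b).
Proof.
move=> [x [i [Gx ->]]] [y [j [Gy ->]]].
have [z Gz ni_y] := expr_mulmx_repr i Gy.
exists (x * z)%g, (i + j)%N; split; first exact: groupM.
by rewrite repr_mxM // exprD -mulmxE -!mulmxA (mulmxA (n ^+ i)) ni_y !mulmxA.
Qed.

Lemma inA_expr a k : inA rG n a -> inA rG n (a ^+ k).
Proof.
move=> Aa; elim: k => [|k IHk]; last by rewrite exprS -mulmxE; apply: inA_mulmx.
by exists 1%g, 0%N; rewrite group1 repr_mx1 expr0 mul1mx.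
Qed.

End NormalizerOfRepresentation.

Lemma normr_det_inA (R : numFieldType) (gT : finGroupType) (G : {group gT})
    d (rG : mx_representation R G d.+1) (n M : 'M[R]_d.+1) k :
  (0 < k)%N -> n ^+ k = 1 -> inA rG n M -> `|\det M| = 1.
Proof.
move=> k_gt0 nk1 [x [i [Gx ->]]].
have rGx1 : rG x ^+ #[x]%g = 1 by rewrite -repr_mxX // expg_order repr_mx1.
rewrite detM det_expr normrM normrX (normr_det_eq1 k_gt0 nk1).
by rewrite (normr_det_eq1 (order_gt0 x) rGx1) expr1n mulr1.
Qed.

Lemma inA'_scalar_expr_eq1 (R : realFieldType) (gT : finGroupType)
    (G : {group gT}) d (rG : mx_representation R G d.+1)
    (n a : 'M[R]_d.+1) m l :
  n \in unitmx ->
  (forall x, x \in G -> exists y, y \in G /\ n *m rG x *m invmx n = rG y) ->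
  odd d.+1 -> inA' rG n a -> `|\det a| = 1 -> a ^+ m = l%:M -> a ^+ m = 1.
Proof.
move=> n_unit n_normalizes odd_d [Aa detA'] det_a am_l.
have : `|l| ^+ d.+1 = 1.
  by rewrite -normrX -det_scalar -am_l det_expr normrX det_a expr1n.
move/eqP; rewrite pexpr_eq1 ?normr_ge0 // => /eqP/normr_eq1P [l1|lN1].
  by rewrite am_l l1.
have det_amN1 : \det (a ^+ m) = -1.
  by rewrite am_l lN1 det_scalar -signr_odd odd_d expr1.
have A_N1 : inA rG n (- 1%:M).
  have -> : - 1%:M = l%:M :> 'M[R]_d.+1 by rewrite lN1 raddfN.
  by rewrite -am_l; apply: inA_expr.
move: det_amN1; rewrite det_expr detA' // expr1n => /eqP.
by rewrite -addr_eq0 -[1 + 1]/(2%:R) pnatr_eq0.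
Qed.

Lemma same_ad_centgmx (R : fieldType) (gT : finGroupType) (G : {group gT})
    d (rG : mx_representation R G d.+1) (a b : 'M[R]_d.+1) :
  a \in unitmx -> b \in unitmx -> same_ad rG a b -> centgmx rG (invmx b *m a).
Proof.
move=> a_unit b_unit ad_ab; apply/centgmxP => x Gx.
have a_x : a *m rG x = b *m rG x *m invmx b *m a by rewrite -ad_ab ?mulmxKV.
by rewrite -mulmxA a_x !mulmxA mulVmx ?mul1mx.
Qed.

Lemma same_ad_scalar (R : rcfType) (gT : finGroupType) (G : {group gT})
    d (rG : mx_representation R G d.+1) (a b : 'M[R]_d.+1) :
  odd d.+1 -> mx_irreducible rG -> a \in unitmx -> b \in unitmx ->
  same_ad rG a b -> exists mu, a = mu *: b.
Proof.
move=> odd_d irrG a_unit b_unit ad_ab.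
have [mu bam] :=
  odd_centgmx_scalar odd_d irrG (same_ad_centgmx a_unit b_unit ad_ab).
by exists mu; rewrite -mul_mx_scalar -bam mulKVmx.
Qed.

Lemma ad_trivial_centgmx (R : fieldType) (gT : finGroupType) (G : {group gT})
    d (rG : mx_representation R G d.+1) (c : 'M[R]_d.+1) :
  c \in unitmx -> ad_trivial rG c -> centgmx rG c.
Proof.
by move=> c_unit ad_c; apply/centgmxP => x Gx; rewrite -{2}(ad_c x) ?mulmxKV.
Qed.

Theorem proposition2 (R : realType) (gT : finGroupType) (G : {group gT})
  (d : nat) (rG : mx_representation R G d.+1) (n : 'M[R]_d.+1) :
  odd d.+1 ->
  mx_faithful rG ->
  mx_irreducible rG ->
  (exists x, x \in G /\ rG x != 1%:M) ->
  (forall x, x \in G -> rG x != - 1%:M) ->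
  n \in unitmx ->
  (forall x, x \in G -> exists y, y \in G /\ n *m rG x *m invmx n = rG y) ->
  (exists k : nat, (0 < k)%N /\ n ^+ k = 1%:M) ->
  (exists g, g \in G /\
     exists m : nat, ad_order rG (rG g *m n) m /\ ~~ odd m /\
     exists a, inA' rG n a /\ same_ad rG a (rG g *m n) /\
       0 < m%:R^-1 * \sum_(k < m) \tr (a ^+ k) /\
       0 < m%:R^-1 * \sum_(k < m) (-1) ^+ k * \tr (a ^+ k)) ->
  exists g, g \in G /\ eigenvalue (rG g *m n) 1.
Proof.
move=> odd_d _ irrG _ _ n_unit n_normalizes [k [k_gt0 nk1]]
  [g [Gg [m [[_ [ad_bm _]] [even_m [a [A'a [ad_ab [tr_pos trN_pos]]]]]]]]].
exists g; split=> //; set b := rG g *m n in ad_bm ad_ab *.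
have Ab : inA rG n b by exists g, 1%N; rewrite expr1.
have Aa : inA rG n a by case: A'a.
have [a_unit b_unit] := (inA_unitmx n_unit Aa, inA_unitmx n_unit Ab).
have [det_a det_b] := (normr_det_inA k_gt0 nk1 Aa, normr_det_inA k_gt0 nk1 Ab).
have [mu a_mu] := same_ad_scalar odd_d irrG a_unit b_unit ad_ab.
have [l bm_l] := odd_centgmx_scalar odd_d irrG
  (ad_trivial_centgmx (unitrX m b_unit) ad_bm).
have am1 : a ^+ m = 1.
  apply: inA'_scalar_expr_eq1 n_unit n_normalizes odd_d A'a det_a _.
  by rewrite a_mu exprZn bm_l scale_scalar_mx.
have Nam1 : (- a) ^+ m = 1.
  by rewrite -scaleN1r exprZn am1 -signr_odd (negbTE even_m) scale1r.
have mean_Na : 0 < m%:R^-1 * \sum_(k < m) \tr ((- a) ^+ k).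
  by under eq_bigr => i _ do rewrite -scaleN1r exprZn mxtraceZ.
have mu1 : `|mu| = 1.
  apply/eqP; rewrite -(pexpr_eq1 (ltn0Sn d)) ?normr_ge0 //.
  by rewrite -det_a a_mu detZ normrM det_b mulr1 normrX.
apply: eigenvalue1_sign_scale mu1 a_mu _ _.
  exact: eigenvalue1_mean_tr_gt0 am1 tr_pos.
exact: eigenvalue1_mean_tr_gt0 Nam1 mean_Na.
Qed.
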